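(* Let $\Gamma$ be an art gallery that is not normal. Then every configuration of guards in $\Gamma$ that visually covers the walls of $\Gamma$ but does not visually cover all of $\Gamma$ has at least three guards.
   Context: An art gallery $\Gamma$ is a simple polygon in the plane (closed region: boundary together with interior), whose boundary (the walls) consists of finitely many line segments. A guard is a point of $\Gamma$; a guard $G$ visually covers $A\in\Gamma$ if the segment $GA$ lies entirely in $\Gamma$. A configuration of guards is a finite set $F$ of points of $\Gamma$; it visually covers $X\subseteq\Gamma$ if each point of $X$ is visually covered by some guard in $F$. $\Gamma$ is normal if every configuration of guards visually covering the walls visually covers all of $\Gamma$. *)

From Stdlib Require Import Reals List Arith.
Import ListNotations.
Open Scope R_scope.

Definition point : Type := (R * R)%type.

Definition seg (a b x : point) : Prop :=
  exists t : R, 0 <= t <= 1 /\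
    x = ((1 - t) * fst a + t * fst b, (1 - t) * snd a + t * snd b).

(* a polygon is given by its cyclic list of vertices *)
Definition vtx (P : list point) (i : nat) : point :=
  nth (i mod length P) P (0, 0).

Definition edge (P : list point) (i : nat) (x : point) : Prop :=
  seg (vtx P i) (vtx P (S i)) x.

Definition walls (P : list point) (x : point) : Prop :=
  exists i, (i < length P)%nat /\ edge P i x.

Definition simple_polygon (P : list point) : Prop :=
  (3 <= length P)%nat /\
  (forall i, (i < length P)%nat -> vtx P i <> vtx P (S i)) /\
  (forall i j, (i < length P)%nat -> (j < length P)%nat -> i <> j ->
     forall x, edge P i x -> edge P j x ->
       (j = (S i) mod length P /\ x = vtx P (S i)) \/
       (i = (S j) mod length P /\ x = vtx P (S j))).

Fixpoint clear_path (P : list point) (a : point) (l : list point) : Prop :=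
  match l with
  | [] => True
  | b :: l' => (forall x, seg a b x -> ~ walls P x) /\ clear_path P b l'
  end.

Definition norm2 (p : point) : R := fst p * fst p + snd p * snd p.

(* p lies in the unbounded component of the complement of the walls *)
Definition exterior (P : list point) (p : point) : Prop :=
  ~ walls P p /\
  forall M : R, exists l : list point,
    clear_path P p l /\ M < norm2 (last l p).

(* the art gallery: closed region = walls together with interior
   = complement of the unbounded component of the complement of the walls *)
Definition gallery (P : list point) (x : point) : Prop := ~ exterior P x.

Definition covers_pt (P : list point) (g a : point) : Prop :=
  forall x, seg g a x -> gallery P x.

Definition covers (P : list point) (F : list point) (X : point -> Prop) : Prop :=
  forall a, X a -> exists g, In g F /\ covers_pt P g a.

Definition guard_config (P : list point) (F : list point) : Prop :=
  Forall (gallery P) F.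

Definition normal (P : list point) : Prop :=
  forall F, guard_config P F -> covers P F (walls P) -> covers P F (gallery P).

(* Suppose at most two guards cover the walls but some gallery point a is
   seen by none of them; a is then off the walls.  For a guard g the segment
   ga meets the exterior, so the line through g and a meets the walls on both
   sides of a, cutting out a chord pw through a that lies in the gallery;
   the exterior point on ga lies on both gp and gw, so g sees neither p nor w.
   With one guard this already contradicts the covering of the walls.  With
   two guards g, h, the guard h must see both p and w.  The segments hp, hw
   and the chord pw then bound a (possibly degenerate) triangle with boundary
   in the gallery; a polygonal path from inside it to infinity must cross the
   boundary, so the whole triangle lies in the gallery, and in particular h
   sees a. *)
From Stdlib Require Import Reals List Arith Lra Lia Psatz Classical.
Import ListNotations.
Open Scope R_scope.

(** * Points on lines and segments *)

Definition line_at (a d : point) (t : R) : point :=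
  (fst a + t * fst d, snd a + t * snd d).
Definition vsub (b a : point) : point := (fst b - fst a, snd b - snd a).
Definition vopp (d : point) : point := (- fst d, - snd d).
Definition dist2 (x y : point) : R := norm2 (vsub x y).

Lemma point_eq (x y : point) : fst x = fst y -> snd x = snd y -> x = y.
Proof. destruct x, y; simpl; intros -> ->; reflexivity. Qed.

Lemma line_at0 (a d : point) : line_at a d 0 = a.
Proof. apply point_eq; unfold line_at; simpl; ring. Qed.

Lemma line_at_vsub1 (a b : point) : line_at a (vsub b a) 1 = b.
Proof. apply point_eq; unfold line_at, vsub; simpl; ring. Qed.

Lemma line_at_vopp (a d : point) (t : R) : line_at a (vopp d) t = line_at a d (- t).
Proof. apply point_eq; unfold line_at, vopp; simpl; ring. Qed.

Lemma norm2_ge0 (d : point) : 0 <= norm2 d.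
Proof. unfold norm2; nra. Qed.

Lemma dist2_pos (x y : point) : x <> y -> 0 < dist2 x y.
Proof.
  intros Hxy. unfold dist2, norm2, vsub; simpl.
  destruct (Req_dec (fst x - fst y) 0) as [E1|E1];
    [destruct (Req_dec (snd x - snd y) 0) as [E2|E2]|].
  - exfalso. apply Hxy, point_eq; lra.
  - rewrite E1. nra.
  - pose proof (Rle_0_sqr (snd x - snd y)). unfold Rsqr in *. nra.
Qed.

Lemma seg_line_at (a d : point) (al be ga : R) :
  (al <= be <= ga \/ ga <= be <= al) ->
  seg (line_at a d al) (line_at a d ga) (line_at a d be).
Proof.
  intros Hbe. destruct (Req_dec al ga) as [<-|Hne].
  - exists 0. split; [lra|]. replace be with al by lra.
    apply point_eq; unfold line_at; simpl; ring.
  - set (t := (be - al) / (ga - al)).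
    assert (Ht : t * (ga - al) = be - al) by (unfold t; field; lra).
    exists t. split.
    + destruct Hbe; split; nra.
    + replace be with (al + t * (ga - al)) by lra.
      apply point_eq; unfold line_at; simpl; ring.
Qed.

Lemma seg_line_at_inv (a d : point) (al ga : R) (x : point) :
  seg (line_at a d al) (line_at a d ga) x ->
  exists be, (al <= be <= ga \/ ga <= be <= al) /\ x = line_at a d be.
Proof.
  intros [t [Ht ->]]. exists ((1 - t) * al + t * ga). split.
  - destruct (Rle_dec al ga); [left|right]; split; nra.
  - apply point_eq; unfold line_at; simpl; ring.
Qed.

Lemma seg_line_at_vsub (u v x : point) :
  seg u v x -> exists t, 0 <= t <= 1 /\ x = line_at u (vsub v u) t.
Proof.
  intros [t [Ht ->]]. exists t. split; [lra|].
  apply point_eq; unfold line_at, vsub; simpl; ring.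
Qed.

Lemma seg_sym (a b x : point) : seg a b x -> seg b a x.
Proof.
  intros [t [Ht ->]]. exists (1 - t). split; [lra|].
  apply point_eq; simpl; ring.
Qed.

Lemma seg_left (a b : point) : seg a b a.
Proof. exists 0. split; [lra|]. apply point_eq; simpl; ring. Qed.

Lemma seg_right (a b : point) : seg a b b.
Proof. exists 1. split; [lra|]. apply point_eq; simpl; ring. Qed.

Lemma seg_same (a x : point) : seg a a x -> x = a.
Proof. intros [t [_ ->]]. apply point_eq; simpl; ring. Qed.

Lemma seg_subseg (y b q x : point) : seg y b q -> seg q y x -> seg y b x.
Proof.
  intros [t [Ht ->]] [u [Hu ->]]. exists ((1 - u) * t). split; [nra|].
  apply point_eq; simpl; ring.
Qed.

(** * The exterior *)

Definition clear_seg (P : list point) (a b : point) : Prop :=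
  forall x, seg a b x -> ~ walls P x.

Lemma walls_gallery (P : list point) (x : point) : walls P x -> gallery P x.
Proof. intros Hw [Hx _]. exact (Hx Hw). Qed.

Lemma last_cons (l : list point) (b q : point) : last (b :: l) q = last l b.
Proof.
  destruct l as [|c l]; [reflexivity|]. simpl.
  revert c; induction l as [|e l IH]; intros c; [reflexivity|].
  simpl. destruct l; [reflexivity|]. apply (IH e).
Qed.

Lemma exterior_prepend (P : list point) (q b : point) :
  exterior P b -> clear_seg P q b -> exterior P q.
Proof.
  intros [_ Hpath] Hqb. split.
  - apply Hqb, seg_left.
  - intros M. destruct (Hpath M) as [l [Hl HM]]. exists (b :: l).
    split; [split; assumption|]. rewrite last_cons. exact HM.
Qed.

Lemma exterior_subseg (P : list point) (y b q : point) :
  exterior P y -> clear_seg P y b -> seg y b q -> exterior P q.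
Proof.
  intros Hy Hyb Hq. apply (exterior_prepend P q y Hy).
  intros x Hx. apply Hyb. apply (seg_subseg y b q x Hq Hx).
Qed.

(** * The first wall point along a ray *)

Lemma quadratic_min_unit (al be : R) : 0 <= al -> exists s0, 0 <= s0 <= 1 /\
  forall s, 0 <= s <= 1 -> al * s0 * s0 + be * s0 <= al * s * s + be * s.
Proof.
  intros Hal. destruct (Req_dec al 0) as [->|Hal0].
  - destruct (Rle_dec 0 be).
    + exists 0. split; [lra|]. intros s Hs. nra.
    + exists 1. split; [lra|]. intros s Hs. nra.
  - (* the unconstrained minimiser - be / (2 al), clamped to [0, 1] *)
    set (m := - be / (2 * al)).
    assert (Hm : 2 * al * m = - be) by (unfold m; field; lra).
    clearbody m.
    destruct (Rle_dec m 0); [|destruct (Rle_dec 1 m)].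
    + exists 0. split; [lra|]. intros s Hs.
      assert (0 <= be) by nra. assert (0 <= al * s * s) by nra. nra.
    + exists 1. split; [lra|]. intros s Hs.
      assert (al * (s + 1) <= al * 2) by nra. nra.
    + exists m. split; [lra|]. intros s Hs.
      assert (0 <= al * ((s - m) * (s - m)))
        by (apply Rmult_le_pos; [exact Hal|apply Rle_0_sqr]).
      replace be with (- (2 * al * m)) by lra. nra.
Qed.

Lemma seg_separated (u v z : point) : ~ seg u v z ->
  exists e, 0 < e /\ forall y, seg u v y -> e <= dist2 y z.
Proof.
  intros Hz.
  set (d := vsub v u). set (w := vsub u z).
  destruct (quadratic_min_unit (norm2 d) (2 * (fst w * fst d + snd w * snd d)))
    as [s0 [Hs0 Hmin]]; [apply norm2_ge0|].
  set (q := line_at u d s0).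
  exists (dist2 q z). split.
  - apply dist2_pos. intros Hqz. apply Hz.
    exists s0. split; [exact Hs0|]. rewrite <- Hqz.
    apply point_eq; unfold q, line_at, d, vsub; simpl; ring.
  - intros y Hy. destruct (seg_line_at_vsub u v y Hy) as [s [Hs ->]].
    specialize (Hmin s Hs).
    unfold dist2, norm2, q, line_at, vsub in *; fold d; simpl in *.
    unfold w in Hmin; simpl in Hmin. nra.
Qed.

Lemma walls_separated (P : list point) (z : point) : ~ walls P z ->
  exists e, 0 < e /\ forall y, walls P y -> e <= dist2 y z.
Proof.
  intros Hz.
  assert (Hk : forall k, exists e, 0 < e /\
            forall i y, (i < k)%nat -> (i < length P)%nat -> edge P i y -> e <= dist2 y z).
  { induction k as [|k [e1 [He1 H1]]].
    - exists 1. split; [lra|]. intros; lia.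
    - destruct (lt_dec k (length P)) as [Hkl|Hkl].
      + assert (Hk' : ~ edge P k z) by (intros E; apply Hz; exists k; auto).
        destruct (seg_separated _ _ _ Hk') as [e2 [He2 H2]].
        exists (Rmin e1 e2). split; [apply Rmin_glb_lt; assumption|].
        intros i y Hi Hil Hy. destruct (Nat.eq_dec i k) as [->|Ne].
        * eapply Rle_trans; [apply Rmin_r|]. exact (H2 y Hy).
        * eapply Rle_trans; [apply Rmin_l|]. apply (H1 i); auto; lia.
      + exists e1. split; [exact He1|]. intros i y Hi Hil. apply H1; lia. }
  destruct (Hk (length P)) as [e [He H]].
  exists e. split; [exact He|]. intros y [i [Hi Hy]]. exact (H i y Hi Hi Hy).
Qed.

Lemma small_step (e nd : R) : 0 < e -> 0 <= nd -> exists dl, 0 < dl /\ dl * dl * nd < e.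
Proof.
  intros He Hnd. set (dl := Rmin 1 (e / (nd + 1))).
  assert (H1 : dl <= 1) by apply Rmin_l.
  assert (H2 : dl <= e / (nd + 1)) by apply Rmin_r.
  assert (H3 : 0 < dl) by (apply Rmin_glb_lt; [lra|apply Rdiv_lt_0_compat; lra]).
  assert (H4 : dl * (nd + 1) <= e).
  { apply (Rmult_le_compat_r (nd + 1)) in H2; [|lra].
    replace (e / (nd + 1) * (nd + 1)) with e in H2 by (field; lra). exact H2. }
  exists dl. split; [exact H3|]. nra.
Qed.

Lemma first_wall_hit (P : list point) (a d : point) (T : R) :
  ~ walls P a -> 0 < T -> walls P (line_at a d T) ->
  exists t0, 0 < t0 <= T /\ walls P (line_at a d t0) /\
    forall t, 0 <= t < t0 -> ~ walls P (line_at a d t).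
Proof.
  intros Ha HT HwT.
  (* t0 is the infimum of the hitting times, obtained as - sup of their negatives *)
  set (E := fun x => exists t, 0 <= t /\ walls P (line_at a d t) /\ x = - t).
  assert (Hbd : bound E) by (exists 0; intros x [t [Ht [_ ->]]]; lra).
  assert (Hne : exists x, E x) by (exists (- T), T; repeat split; auto; lra).
  destruct (completeness E Hbd Hne) as [m [Hub Hlub]].
  set (t0 := - m).
  assert (Hlow : forall t, 0 <= t -> walls P (line_at a d t) -> t0 <= t).
  { intros t Ht Hw. assert (Hm : - t <= m) by (apply Hub; exists t; auto).
    unfold t0; lra. }
  assert (Ht0 : 0 <= t0).
  { assert (m <= 0) by (apply Hlub; intros x [t [Ht [_ ->]]]; lra). unfold t0; lra. }
  assert (Happrox : forall dl, 0 < dl ->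
            exists t, 0 <= t /\ walls P (line_at a d t) /\ t < t0 + dl).
  { intros dl Hdl. apply NNPP. intros Hn.
    assert (m <= m - dl); [|lra].
    apply Hlub. intros x [t [Ht [Hw ->]]].
    apply Rnot_lt_le. intros Hlt. apply Hn. exists t. unfold t0. repeat split; auto; lra. }
  assert (Hw0 : walls P (line_at a d t0)).
  { apply NNPP. intros Hn. destruct (walls_separated P _ Hn) as [e [He Hsep]].
    destruct (small_step e (norm2 d) He (norm2_ge0 d)) as [dl [Hdl Hsmall]].
    destruct (Happrox dl Hdl) as [t [Ht [Hw Htl]]].
    specialize (Hsep _ Hw). specialize (Hlow t Ht Hw).
    assert (Hd : dist2 (line_at a d t) (line_at a d t0) = (t - t0) * (t - t0) * norm2 d)
      by (unfold dist2, norm2, line_at, vsub; simpl; ring).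
    assert ((t - t0) * (t - t0) * norm2 d <= dl * dl * norm2 d)
      by (apply Rmult_le_compat_r; [apply norm2_ge0|nra]).
    lra. }
  exists t0. repeat split.
  - destruct (Req_dec t0 0) as [Z|Z]; [|lra].
    rewrite Z, line_at0 in Hw0. contradiction.
  - apply Hlow; [lra|exact HwT].
  - exact Hw0.
  - intros t Ht Hw. specialize (Hlow t (proj1 Ht) Hw). lra.
Qed.

Lemma norm2_line_at_unbounded (a d : point) (M : R) : 0 < norm2 d ->
  exists T, 1 <= T /\ M < norm2 (line_at a d T).
Proof.
  intros Hd.
  set (ad := fst a * fst d + snd a * snd d).
  set (T := 1 + (Rabs M + 2 * Rabs ad) / norm2 d).
  assert (HT : T * norm2 d = norm2 d + Rabs M + 2 * Rabs ad)
    by (unfold T; field; lra).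
  assert (HM := Rle_abs M). assert (HMp := Rabs_pos M).
  assert (Had : - Rabs ad <= ad)
    by (pose proof (Rle_abs (- ad)) as H; rewrite Rabs_Ropp in H; lra).
  assert (HT1 : 1 <= T).
  { assert (0 <= (T - 1) * norm2 d) by (pose proof (Rabs_pos ad); lra). nra. }
  exists T. split; [exact HT1|].
  assert (E : norm2 (line_at a d T) = norm2 a + 2 * T * ad + T * (T * norm2 d))
    by (unfold norm2, line_at, ad; simpl; ring).
  rewrite E, HT. pose proof (norm2_ge0 a). nra.
Qed.

Lemma gallery_ray_hits_walls (P : list point) (a d : point) :
  gallery P a -> ~ walls P a -> 0 < norm2 d ->
  exists T, 0 < T /\ walls P (line_at a d T).
Proof.
  intros Hg Ha Hd. apply NNPP. intros Hn. apply Hg. split; [exact Ha|].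
  intros M. destruct (norm2_line_at_unbounded a d M Hd) as [T [HT HM]].
  exists [line_at a d T]. split; [|exact HM].
  split; [|exact I]. intros x Hx.
  rewrite <- (line_at0 a d) in Hx at 1.
  destruct (seg_line_at_inv _ _ _ _ _ Hx) as [be [Hbe ->]].
  destruct (Req_dec be 0) as [->|Z].
  - rewrite line_at0. exact Ha.
  - intros Hw. apply Hn. exists be. split; [lra|exact Hw].
Qed.

(** * Triangles with boundary in the gallery *)

Definition cross (u v : point) : R := fst u * snd v - snd u * fst v.
Definition area2 (a b c : point) : R := cross (vsub b a) (vsub c a).
Definition bary (l m n : R) (a b c : point) : point :=
  (l * fst a + m * fst b + n * fst c, l * snd a + m * snd b + n * snd c).

(* area2 x b c, area2 x c a, area2 x a b are the barycentric coordinates of x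
   scaled by area2 a b c *)
Definition in_triangle (a b c x : point) : Prop :=
  0 <= area2 a b c * area2 x b c /\ 0 <= area2 a b c * area2 x c a /\
  0 <= area2 a b c * area2 x a b.

Lemma area2_rot (a b c : point) : area2 b c a = area2 a b c.
Proof. unfold area2, cross, vsub; simpl; ring. Qed.

Lemma in_triangle_rot (a b c x : point) : in_triangle a b c x -> in_triangle b c a x.
Proof. unfold in_triangle. rewrite (area2_rot a b c). tauto. Qed.

Lemma area2_bary_decomp (a b c x : point) : area2 a b c <> 0 ->
  let D := area2 a b c in
  x = bary (area2 x b c / D) (area2 x c a / D) (area2 x a b / D) a b c.
Proof.
  intros HD D. unfold D.
  apply point_eq; unfold bary, area2, cross, vsub in *; simpl in *; field; exact HD.
Qed.

Lemma area2_bary (l m n : R) (a b c : point) : l + m + n = 1 ->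
  area2 (bary l m n a b c) b c = l * area2 a b c /\
  area2 (bary l m n a b c) c a = m * area2 a b c /\
  area2 (bary l m n a b c) a b = n * area2 a b c.
Proof.
  intros S. replace n with (1 - l - m) by lra.
  unfold area2, cross, vsub, bary; simpl; repeat split; ring.
Qed.

Lemma in_triangle_bary (l m n : R) (a b c : point) :
  0 <= l -> 0 <= m -> 0 <= n -> l + m + n = 1 -> in_triangle a b c (bary l m n a b c).
Proof.
  intros Hl Hm Hn S. unfold in_triangle.
  destruct (area2_bary l m n a b c S) as [-> [-> ->]].
  pose proof (Rle_0_sqr (area2 a b c)). unfold Rsqr in *.
  repeat split; nra.
Qed.

Lemma div_nonneg_same_sign (D c : R) : D <> 0 -> 0 <= D * c -> 0 <= c / D.
Proof.
  intros HD Hc. replace (c / D) with ((D * c) / (D * D)) by (field; exact HD).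
  unfold Rdiv. apply Rmult_le_pos; [exact Hc|].
  left. apply Rinv_0_lt_compat, Rsqr_pos_lt, HD.
Qed.

Lemma in_triangle_coords (a b c x : point) : area2 a b c <> 0 -> in_triangle a b c x ->
  exists l m n, 0 <= l /\ 0 <= m /\ 0 <= n /\ l + m + n = 1 /\ x = bary l m n a b c.
Proof.
  intros HD [Hl [Hm Hn]].
  exists (area2 x b c / area2 a b c), (area2 x c a / area2 a b c), (area2 x a b / area2 a b c).
  repeat split; try (apply div_nonneg_same_sign; assumption).
  - assert (S : area2 x b c + area2 x c a + area2 x a b = area2 a b c)
      by (unfold area2, cross, vsub; simpl; ring).
    unfold Rdiv. rewrite <- !Rmult_plus_distr_r, S. exact (Rinv_r _ HD).
  - exact (area2_bary_decomp a b c x HD).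
Qed.

Lemma in_triangle_side (a b c q : point) : area2 a b c <> 0 -> in_triangle a b c q ->
  area2 q b c = 0 -> seg b c q.
Proof.
  intros HD Hq Hz.
  destruct (in_triangle_coords a b c q HD Hq) as [l [m [n [Hl [Hm [Hn [S ->]]]]]]].
  destruct (area2_bary l m n a b c S) as [Hla _].
  assert (l = 0) as ->.
  { rewrite Hz in Hla. symmetry in Hla.
    destruct (Rmult_integral _ _ Hla); [assumption|contradiction]. }
  exists n. split; [lra|]. replace m with (1 - n) by lra.
  apply point_eq; unfold bary; simpl; ring.
Qed.

Lemma norm2_bary_le (l m n : R) (a b c : point) :
  0 <= l -> 0 <= m -> 0 <= n -> l + m + n = 1 ->
  norm2 (bary l m n a b c) <= norm2 a + norm2 b + norm2 c.
Proof.
  intros Hl Hm Hn S.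
  assert (Hconv : forall p q r, (l * p + m * q + n * r) * (l * p + m * q + n * r)
                              <= p * p + q * q + r * r).
  { intros p q r.
    (* the convexity defect of the square is a sum of weighted squared differences *)
    assert (E : l * (p * p) + m * (q * q) + n * (r * r) =
      (l * p + m * q + n * r) * (l * p + m * q + n * r) + l * m * ((p - q) * (p - q))
       + l * n * ((p - r) * (p - r)) + m * n * ((q - r) * (q - r)))
      by (replace n with (1 - l - m) by lra; ring).
    assert (Hw : forall k v, 0 <= k -> 0 <= k * (v * v))
      by (intros k v Hk; apply Rmult_le_pos; [exact Hk|apply Rle_0_sqr]).
    pose proof (Hw (l * m) (p - q) ltac:(nra)). pose proof (Hw (l * n) (p - r) ltac:(nra)).
    pose proof (Hw (m * n) (q - r) ltac:(nra)).
    pose proof (Hw (1 - l) p ltac:(lra)). pose proof (Hw (1 - m) q ltac:(lra)).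
    pose proof (Hw (1 - n) r ltac:(lra)).
    lra. }
  pose proof (Hconv (fst a) (fst b) (fst c)). pose proof (Hconv (snd a) (snd b) (snd c)).
  unfold norm2, bary; simpl. lra.
Qed.

(* how long t |-> (1 - t) f0 + t f1 stays nonnegative on [0, 1], given f0 >= 0 *)
Definition exit_time (f0 f1 : R) : R := if Rlt_dec f1 0 then f0 / (f0 - f1) else 1.

Lemma exit_time_spec (f0 f1 : R) : 0 <= f0 ->
  0 <= exit_time f0 f1 <= 1 /\ (f1 < 0 -> exit_time f0 f1 < 1) /\
  (forall t, 0 <= t <= exit_time f0 f1 -> 0 <= (1 - t) * f0 + t * f1) /\
  (exit_time f0 f1 < 1 -> (1 - exit_time f0 f1) * f0 + exit_time f0 f1 * f1 = 0).
Proof.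
  intros H0. unfold exit_time. destruct (Rlt_dec f1 0) as [L|L].
  - assert (Ht : f0 / (f0 - f1) * (f0 - f1) = f0) by (field; lra).
    set (t0 := f0 / (f0 - f1)) in *.
    repeat split; intros; nra.
  - repeat split; intros; nra.
Qed.

Lemma triangle_exit (a b c y z : point) : area2 a b c <> 0 ->
  in_triangle a b c y -> ~ in_triangle a b c z ->
  exists q, seg y z q /\ (seg b c q \/ seg c a q \/ seg a b q).
Proof.
  intros HD Hy Hz. pose proof Hy as [Ya [Yb Yc]].
  set (D := area2 a b c) in *.
  destruct (exit_time_spec _ (D * area2 z b c) Ya) as [Ta1 [Ta2 [Ta3 Ta4]]].
  destruct (exit_time_spec _ (D * area2 z c a) Yb) as [Tb1 [Tb2 [Tb3 Tb4]]].
  destruct (exit_time_spec _ (D * area2 z a b) Yc) as [Tc1 [Tc2 [Tc3 Tc4]]].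
  set (ta := exit_time _ (D * area2 z b c)) in *.
  set (tb := exit_time _ (D * area2 z c a)) in *.
  set (tc := exit_time _ (D * area2 z a b)) in *.
  set (ts := Rmin ta (Rmin tb tc)).
  assert (Hts : ts <= ta /\ ts <= tb /\ ts <= tc).
  { unfold ts, Rmin. repeat destruct Rle_dec; lra. }
  assert (Hcase : ts = ta \/ ts = tb \/ ts = tc).
  { unfold ts, Rmin. repeat destruct Rle_dec; auto. }
  assert (Hts1 : ts < 1).
  { apply Rnot_le_lt. intros N. apply Hz. unfold in_triangle; fold D.
    repeat split; apply Rnot_lt_le; intros L;
      [specialize (Ta2 L)|specialize (Tb2 L)|specialize (Tc2 L)]; lra. }
  (* yz leaves the triangle at q, where one of the coordinates first vanishes *)
  set (q := line_at y (vsub z y) ts).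
  assert (Hq : forall u v, D * area2 q u v = (1 - ts) * (D * area2 y u v) + ts * (D * area2 z u v))
    by (intros; unfold q, area2, cross, vsub, line_at; simpl; ring).
  assert (Hqin : in_triangle a b c q).
  { unfold in_triangle; fold D. rewrite !Hq.
    repeat split; [apply Ta3|apply Tb3|apply Tc3]; destruct Hcase as [E|[E|E]]; lra. }
  assert (Zero : forall u, D * u = 0 -> u = 0).
  { intros u Hu. destruct (Rmult_integral _ _ Hu); [contradiction|assumption]. }
  exists q. split.
  { exists ts. split; [destruct Hcase as [E|[E|E]]; lra|].
    apply point_eq; unfold q, line_at, vsub; simpl; ring. }
  destruct Hcase as [E|[E|E]].
  - left. apply (in_triangle_side a b c q HD Hqin).
    apply Zero. rewrite Hq, E. apply Ta4. lra.
  - right; left. apply (in_triangle_side b c a q).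
    + rewrite area2_rot. exact HD.
    + exact (in_triangle_rot a b c q Hqin).
    + apply Zero. rewrite Hq, E. apply Tb4. lra.
  - right; right. apply (in_triangle_side c a b q).
    + rewrite area2_rot, area2_rot. exact HD.
    + exact (in_triangle_rot b c a q (in_triangle_rot a b c q Hqin)).
    + apply Zero. rewrite Hq, E. apply Tc4. lra.
Qed.

Lemma triangle_not_exterior (P : list point) (a b c x : point) : area2 a b c <> 0 ->
  (forall y, seg a b y -> gallery P y) -> (forall y, seg b c y -> gallery P y) ->
  (forall y, seg c a y -> gallery P y) -> in_triangle a b c x -> ~ exterior P x.
Proof.
  intros HD Hab Hbc Hca Hx Hext.
  assert (Hbound : forall y, in_triangle a b c y -> norm2 y <= norm2 a + norm2 b + norm2 c).
  { intros y Hy. destruct (in_triangle_coords a b c y HD Hy) as [l [m [n [? [? [? [? ->]]]]]]].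
    apply norm2_bary_le; assumption. }
  destruct (proj2 Hext (norm2 a + norm2 b + norm2 c)) as [l [Hl HM]].
  revert x Hext Hx Hl HM. induction l as [|z l IH]; intros y Hy Hyin Hl HM.
  - simpl in HM. specialize (Hbound y Hyin). lra.
  - destruct Hl as [Hyz Hl]. rewrite last_cons in HM.
    assert (Hz : exterior P z) by exact (exterior_subseg P y z z Hy Hyz (seg_right y z)).
    destruct (classic (in_triangle a b c z)) as [Hzin|Hzout].
    + exact (IH z Hz Hzin Hl HM).
    + destruct (triangle_exit a b c y z HD Hyin Hzout) as [q [Hq Hside]].
      assert (Hqe := exterior_subseg P y z q Hy Hyz Hq).
      destruct Hside as [S|[S|S]]; [exact (Hbc q S Hqe)|exact (Hca q S Hqe)|exact (Hab q S Hqe)].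
Qed.

(** * Chords *)

Lemma cross_eq0_parallel (u v : point) : 0 < norm2 u -> cross u v = 0 ->
  exists k, fst v = k * fst u /\ snd v = k * snd u.
Proof.
  intros Hu Hc. set (dot := fst u * fst v + snd u * snd v).
  assert (E1 : fst v * norm2 u = dot * fst u - snd u * cross u v)
    by (unfold dot, norm2, cross; ring).
  assert (E2 : snd v * norm2 u = dot * snd u + fst u * cross u v)
    by (unfold dot, norm2, cross; ring).
  rewrite Hc in E1, E2. exists (dot / norm2 u). split.
  - apply (Rmult_eq_reg_r (norm2 u)); [|lra]. rewrite E1. field. lra.
  - apply (Rmult_eq_reg_r (norm2 u)); [|lra]. rewrite E2. field. lra.
Qed.

Lemma covers_pt_seg (P : list point) (g p w y : point) :
  (forall z, seg p w z -> gallery P z) -> covers_pt P g p -> covers_pt P g w ->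
  seg p w y -> covers_pt P g y.
Proof.
  intros Hpw Hp Hw Hy z Hz.
  destruct (Req_dec (area2 g p w) 0) as [Hcol|Hnd].
  - destruct (classic (p = w)) as [<-|Hne].
    { rewrite (seg_same p y Hy) in Hz. exact (Hp z Hz). }
    (* g is on the line pw, and gy is covered by the segments gp, pw and wg *)
    set (d := vsub w p).
    destruct (cross_eq0_parallel d (vsub g p)) as [k [Hk1 Hk2]].
    { apply dist2_pos. congruence. }
    { rewrite <- (area2_rot g p w) in Hcol. exact Hcol. }
    assert (Hg : g = line_at p d k)
      by (apply point_eq; unfold line_at, vsub in *; simpl in *; lra).
    destruct (seg_line_at_vsub p w y Hy) as [be [Hbe Ey]]. fold d in Ey.
    rewrite Hg, Ey in Hz. destruct (seg_line_at_inv _ _ _ _ _ Hz) as [ze [Hze ->]].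
    assert (Ep : line_at p d 0 = p) by apply line_at0.
    assert (Ew : line_at p d 1 = w) by apply line_at_vsub1.
    destruct (Rle_dec 0 ze); [destruct (Rle_dec ze 1)|].
    + pose proof (seg_line_at p d 0 ze 1 ltac:(lra)) as S. rewrite Ep, Ew in S.
      exact (Hpw _ S).
    + pose proof (seg_line_at p d k ze 1 ltac:(lra)) as S. rewrite Ew, <- Hg in S.
      exact (Hw _ S).
    + pose proof (seg_line_at p d k ze 0 ltac:(lra)) as S. rewrite Ep, <- Hg in S.
      exact (Hp _ S).
  - destruct Hy as [t [Ht ->]]. destruct Hz as [s [Hs ->]].
    replace (_, _) with (bary (1 - s) (s * (1 - t)) (s * t) g p w)
      by (apply point_eq; unfold bary; simpl; ring).
    apply (triangle_not_exterior P g p w); [exact Hnd|exact Hp|exact Hpw| |].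
    + intros y Hy. apply Hw, seg_sym, Hy.
    + apply in_triangle_bary; nra.
Qed.

Lemma uncovered_chord (P : list point) (g a x : point) :
  gallery P a -> ~ walls P a -> seg g a x -> exterior P x ->
  exists p w, walls P p /\ walls P w /\ seg p w a /\
    (forall z, seg p w z -> gallery P z) /\ ~ covers_pt P g p /\ ~ covers_pt P g w.
Proof.
  intros Hga Hwa Hx Hxe.
  destruct (seg_line_at_vsub a g x (seg_sym g a x Hx)) as [s [Hs Ex]].
  set (d := vsub g a) in Ex.
  assert (Hd : 0 < norm2 d).
  { apply dist2_pos. intros ->. apply Hga. rewrite <- (seg_same a x Hx). exact Hxe. }
  destruct (classic (exists y, seg a x y /\ walls P y)) as [[y [Hy Hwy]]|Hclear].
  2:{ exfalso. apply Hga. apply (exterior_prepend P a x Hxe).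
      intros y Hy Hw. apply Hclear. eauto. }
  rewrite Ex, <- (line_at0 a d) in Hy at 1.
  destruct (seg_line_at_inv _ _ _ _ _ Hy) as [be [Hbe ->]].
  assert (Hbe0 : be <> 0) by (intros ->; rewrite line_at0 in Hwy; contradiction).
  destruct (first_wall_hit P a d be Hwa ltac:(lra) Hwy) as [t0 [Ht0 [Hw0 Hclear0]]].
  assert (Hdopp : 0 < norm2 (vopp d))
    by (replace (norm2 (vopp d)) with (norm2 d) by (unfold norm2, vopp; simpl; ring); exact Hd).
  destruct (gallery_ray_hits_walls P a (vopp d) Hga Hwa Hdopp) as [T [HT HwT]].
  destruct (first_wall_hit P a (vopp d) T Hwa HT HwT) as [t1 [Ht1 [Hw1 Hclear1]]].
  rewrite line_at_vopp in Hw1.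
  assert (Hclear : forall r, - t1 < r < t0 -> ~ walls P (line_at a d r)).
  { intros r Hr. destruct (Rle_dec 0 r).
    - apply Hclear0. lra.
    - rewrite <- (Ropp_involutive r), <- line_at_vopp. apply Hclear1. lra. }
  assert (Hg : g = line_at a d 1) by (unfold d; rewrite line_at_vsub1; reflexivity).
  exists (line_at a d t0), (line_at a d (- t1)). repeat split; [exact Hw0|exact Hw1| | | |].
  - rewrite <- (line_at0 a d) at 3. apply seg_line_at. lra.
  - intros z Hz Hze. destruct (seg_line_at_inv _ _ _ _ _ Hz) as [r [Hr ->]].
    destruct (Req_dec r t0) as [->|N0]; [exact (walls_gallery P _ Hw0 Hze)|].
    destruct (Req_dec r (- t1)) as [->|N1]; [exact (walls_gallery P _ Hw1 Hze)|].
    apply Hga. apply (exterior_prepend P a _ Hze). intros q Hq.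
    rewrite <- (line_at0 a d) in Hq at 1.
    destruct (seg_line_at_inv _ _ _ _ _ Hq) as [b2 [Hb2 ->]]. apply Hclear. lra.
  - intros Hcov. apply (Hcov x); [|exact Hxe].
    rewrite Hg, Ex. apply seg_line_at. lra.
  - intros Hcov. apply (Hcov x); [|exact Hxe].
    rewrite Hg, Ex. apply seg_line_at. lra.
Qed.

Theorem mainTheorem4 (P : list point) :
  simple_polygon P -> ~ normal P ->
  forall F : list point, NoDup F -> guard_config P F ->
    covers P F (walls P) -> ~ covers P F (gallery P) ->
    (3 <= length F)%nat.
Proof.
  intros HP _ F _ _ Hwalls Hgal.
  destruct (le_lt_dec 3 (length F)) as [L|L]; [exact L|]. exfalso.
  apply Hgal. intros a Ha.
  apply NNPP. intros Hunseen.
  assert (Hwa : ~ walls P a) by (intros W; exact (Hunseen (Hwalls a W))).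
  assert (Hblind : forall g, In g F -> exists x, seg g a x /\ exterior P x).
  { intros g Hg. apply NNPP. intros Hn. apply Hunseen. exists g. split; [exact Hg|].
    intros x Hx Hxe. apply Hn. eauto. }
  destruct F as [|g [|h [|? ?]]]; simpl in L; try lia.
  - destruct HP as [H3 _]. destruct (Hwalls (vtx P 0)) as [g [[] _]].
    exists 0%nat. split; [lia|apply seg_left].
  - destruct (Hblind g (or_introl eq_refl)) as [x [Hx Hxe]].
    destruct (uncovered_chord P g a x Ha Hwa Hx Hxe) as [p [w [Hp [_ [_ [_ [Hgp _]]]]]]].
    destruct (Hwalls p Hp) as [g' [[<-|[]] Hcov]]. exact (Hgp Hcov).
  - destruct (Hblind h (or_intror (or_introl eq_refl))) as [x [Hx Hxe]].
    destruct (uncovered_chord P h a x Ha Hwa Hx Hxe)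
      as [p [w [Hp [Hw [Ha_pw [Hpw [Hhp Hhw]]]]]]].
    assert (Hseen : forall q, walls P q -> ~ covers_pt P h q -> covers_pt P g q).
    { intros q Hq Hhq. destruct (Hwalls q Hq) as [g' [[<-|[<-|[]]] Hcov]];
        [exact Hcov|contradiction]. }
    apply Hunseen. exists g. split; [left; reflexivity|].
    exact (covers_pt_seg P g p w a Hpw (Hseen p Hp Hhp) (Hseen w Hw Hhw) Ha_pw).
Qed.
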